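(* Let $G\subset\mathfrak{S}_6$ be a subgroup isomorphic to $\mathfrak{S}_5$ that acts transitively on $\{0,1,\ldots,5\}$ (a non-standard $\mathfrak{S}_5$), acting on $\mathbb{P}^4=\{x_0+\cdots+x_5=0\}\subset\mathbb{P}^5$ by permuting the coordinates. Let $\Sigma_{10}\subset\mathbb{P}^4$ be the $\mathfrak{S}_6$-orbit of the point $[-1:-1:-1:1:1:1]$. Let $X$ be a $G$-invariant quartic threefold in $\mathbb{P}^4$ that contains $\Sigma_{10}$. Then $X=X_{\frac{1}{6}}$.
   Context: For $t\in\mathbb{C}$, $X_t\subset\mathbb{P}^4=\{x_0+\cdots+x_5=0\}\subset\mathbb{P}^5$ denotes the quartic threefold given by $\sum_{i=0}^5x_i^4=t\big(\sum_{i=0}^5x_i^2\big)^2$. *)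

From HB Require Import structures.
From mathcomp Require Import all_boot all_order all_algebra all_fingroup.
From mathcomp Require Import complex.
From mathcomp Require Import Rstruct.
From mathcomp Require Import mpoly.
From Stdlib Require Rdefinitions.

Set Implicit Arguments. Unset Strict Implicit. Unset Printing Implicit Defensive.
Import Order.TTheory GRing.Theory Num.Theory.
Local Open Scope ring_scope.

Notation CC := (complex Rdefinitions.R).

(* Points of C^6 (affine cones over points of P^5). *)
Definition pt := 'I_6 -> CC.

Definition in_P4 (x : pt) : Prop := \sum_(i < 6) x i = 0.

Definition Ft (t : CC) (x : pt) : CC :=
  \sum_(i < 6) x i ^+ 4 - t * (\sum_(i < 6) x i ^+ 2) ^+ 2.

Definition permpt (g : {perm 'I_6}) (x : pt) : pt := fun i => x (g i).

Definition v0 : pt := fun i => if (nat_of_ord i < 3)%N then -1 else 1.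

(* A quartic threefold X in P^4 is given by a homogeneous quartic form f in
   x_0..x_5 which does not vanish identically on P^4; X = {f = 0} in P^4,
   and f is determined by X up to a nonzero scalar modulo (x_0+...+x_5). *)
Definition quartic_threefold (f : {mpoly CC[6]}) : Prop :=
  f \is 4.-homog /\ exists x : pt, in_P4 x /\ f.@[x] != 0.

(* X = {f = 0} is G-invariant: each g in G maps the hypersurface to itself,
   i.e. f o g agrees with f on P^4 up to a nonzero scalar. *)
Definition invariant_under (G : {set {perm 'I_6}}) (f : {mpoly CC[6]}) : Prop :=
  forall g, g \in G -> exists2 c : CC, c != 0 &
     forall x : pt, in_P4 x -> f.@[permpt g x] = c * f.@[x].

Definition contains_Sigma10 (f : {mpoly CC[6]}) : Prop :=
  forall s : {perm 'I_6}, f.@[permpt s v0] = 0.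

Definition is_Xt (t : CC) (f : {mpoly CC[6]}) : Prop :=
  exists2 c : CC, c != 0 & forall x : pt, in_P4 x -> f.@[x] = c * Ft t x.

From HB Require Import structures.
From mathcomp Require Import all_boot all_order all_algebra all_fingroup.
From mathcomp Require Import complex Rstruct mpoly ring zify.

(* Up to conjugation in S6 there is a single transitive subgroup isomorphic to
   S5, namely PGL_2(5) acting on P^1(F_5); we fix the model generated by the
   5-cycle rho and the involution beta, and match G with it by a search over
   the 720 permutations of 'I_6.  The factor by which G rescales f is a
   character of G, so it is trivial on the copy of A5 generated by rho and
   rho ^ beta.  On P4, averaging any quartic monomial over that A5 yields a
   combination of p2^2 and p4, hence f itself is one; vanishing at v0, where
   p2 = p4 = 6, fixes the ratio to be that of F_{1/6}. *)

Set Implicit Arguments.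
Unset Strict Implicit.
Unset Printing Implicit Defensive.
Import GRing.Theory Num.Theory.
Local Open Scope ring_scope.

(** * Permutations as tables *)

Section PermTables.
Variable n : nat.
Implicit Types (p q : {perm 'I_n}) (s t : seq nat).

Definition ptable p : seq nat := [seq val (p i) | i <- enum 'I_n].

(* Junk value 1 when [t] is not a permutation of [iota 0 n]. *)
Definition perm_of_table t : {perm 'I_n} :=
  odflt 1%g (@insub _ _ {perm 'I_n} [ffun i : 'I_n => insubd i (nth 0%N t i)]).

Definition tcomp s t : seq nat := [seq nth 0%N t i | i <- s].

Fixpoint tpow t k : seq nat := if k is k'.+1 then tcomp (tpow t k') t else iota 0 n.

Lemma nth_ptable p (i : 'I_n) : nth 0%N (ptable p) i = p i.
Proof. by rewrite (nth_map i) ?size_enum_ord // nth_ord_enum. Qed.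

Lemma size_ptable p : size (ptable p) = n.
Proof. by rewrite size_map size_enum_ord. Qed.

Lemma ptable_inj : injective ptable.
Proof. by move=> p q E; apply/permP => i; apply: val_inj; rewrite /= -nth_ptable E nth_ptable. Qed.

Lemma ptable1 : ptable 1 = iota 0 n.
Proof. by rewrite /ptable -val_enum_ord; apply: eq_map => i; rewrite perm1. Qed.

Lemma ptableM p q : ptable (p * q) = tcomp (ptable p) (ptable q).
Proof.
by rewrite /tcomp -map_comp; apply: eq_map => i /=; rewrite permM nth_ptable.
Qed.

Lemma ptableX p k : ptable (p ^+ k) = tpow (ptable p) k.
Proof. by elim: k => [|k IHk]; rewrite ?expg0 ?ptable1 // expgSr ptableM IHk. Qed.

Lemma ptable_perm p : perm_eq (ptable p) (iota 0 n).
Proof.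
have uniq_p : uniq (ptable p).
  by rewrite map_inj_uniq ?enum_uniq // => i j /val_inj /perm_inj.
apply: uniq_perm; rewrite ?iota_uniq // => k.
apply/idP/idP => [/mapP[i _ ->]|]; first by rewrite mem_iota ltn_ord.
rewrite mem_iota => /andP[_ lt_kn].
by apply/mapP; exists ((p^-1)%g (Ordinal lt_kn)); rewrite ?mem_enum ?permKV.
Qed.

Lemma perm_of_tableE t : perm_eq t (iota 0 n) ->
  forall i, val (perm_of_table t i) = nth 0%N t i.
Proof.
move=> t_perm.
have size_t : size t = n by rewrite (perm_size t_perm) size_iota.
have uniq_t : uniq t by rewrite (perm_uniq t_perm) iota_uniq.
have t_lt (i : 'I_n) : (nth 0%N t i < n)%N.
  have : nth 0%N t i \in t by rewrite mem_nth // size_t.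
  by rewrite (perm_mem t_perm) mem_iota.
have f_inj : injectiveb [ffun i : 'I_n => insubd i (nth 0%N t i)].
  apply/injectiveP => i j; rewrite !ffunE => /(congr1 val).
  by rewrite !val_insubd !t_lt => /eqP; rewrite nth_uniq ?size_t // => /eqP/val_inj.
move=> i; rewrite /perm_of_table; case: insubP => [p _ pE|]; last by rewrite f_inj.
by rewrite /= -pvalE pE ffunE val_insubd t_lt.
Qed.

Lemma perm_of_ptable p : perm_of_table (ptable p) = p.
Proof.
apply/permP => i; apply: val_inj.
by rewrite perm_of_tableE ?ptable_perm // nth_ptable.
Qed.

Lemma ptable_perm_of_table t : perm_eq t (iota 0 n) -> ptable (perm_of_table t) = t.
Proof.
move=> t_perm; apply: (@eq_from_nth _ 0%N); rewrite size_ptable ?(perm_size t_perm) ?size_iota //.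
by move=> i lt_in; rewrite (_ : i = Ordinal lt_in) // nth_ptable perm_of_tableE.
Qed.

Lemma conj_of_tcomp h a c :
  tcomp (ptable h) (ptable a) = tcomp (ptable c) (ptable h) -> a = (c ^ h)%g.
Proof. by rewrite -!ptableM => /ptable_inj E; rewrite conjgE -E mulKg. Qed.

Definition generated_by (gens L : seq (seq nat)) : bool :=
  (nth [::] L 0 == iota 0 n) &&
  all (fun k => has (fun m => has (fun s => tcomp (nth [::] L m) s == nth [::] L k) gens)
                    (iota 0 k))
      (iota 1 (size L).-1).

Lemma generated_byP (gens : seq {perm 'I_n}) (L : seq (seq nat)) (P : {perm 'I_n} -> Prop) :
  P 1%g -> (forall g h, h \in gens -> P g -> P (g * h)%g) ->
  generated_by [seq ptable h | h <- gens] L ->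
  forall g, g \in [seq perm_of_table t | t <- L] -> P g.
Proof.
move=> P1 P_gens /andP[/eqP L0 /allP L_gen].
suff PL k : (k < size L)%N -> exists2 g, ptable g = nth [::] L k & P g.
  move=> _ /mapP[t t_L ->]; have [g gE Pg] := PL _ (etrans (index_mem t L) t_L).
  by rewrite -(nth_index [::] t_L) -gE perm_of_ptable.
elim/ltn_ind: k => -[_ _|k IH lt_kL]; first by exists 1%g; rewrite ?L0 ?ptable1.
have /L_gen/hasP[m] : k.+1 \in iota 1 (size L).-1.
  by rewrite mem_iota /= add1n prednK // (leq_ltn_trans _ lt_kL).
rewrite mem_iota /= => lt_mk /hasP[_ /mapP[h h_gens ->] /eqP E].
have [g gE Pg] := IH m lt_mk (ltn_trans lt_mk lt_kL).
by exists (g * h)%g; [rewrite ptableM gE | exact: P_gens].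
Qed.

End PermTables.

(** * Transitive copies of S5 in S6 *)

Section TransitiveS5.
Local Open Scope group_scope.

(* Relations satisfied by the 5-cycle (0 1 2 3 4) and the transposition (0 1)
   of S5; they need not present S5. *)
Definition S5_relations (gT : finGroupType) (a b : gT) : Prop :=
  [/\ a ^+ 5 = 1, b ^+ 2 = 1, (a * b) ^+ 4 = 1 & (b * a ^+ 2 * b * a ^+ 3) ^+ 2 = 1].

Lemma S5_relations_morph (aT rT : finGroupType) (D : {group aT})
    (phi : {morphism D >-> rT}) a b :
  a \in D -> b \in D -> S5_relations a b -> S5_relations (phi a) (phi b).
Proof.
move=> Da Db [Ra Rb Rab Rbab].
have DX x k : x \in D -> x ^+ k \in D by move=> Dx; rewrite groupX.
split; first by rewrite -morphX // Ra morph1.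
- by rewrite -morphX // Rb morph1.
- by rewrite -morphM // -morphX ?groupM // Rab morph1.
by rewrite -!morphX // -!morphM ?groupM ?DX // -morphX ?groupM ?DX // Rbab morph1.
Qed.

Lemma S5_relationsJ (gT : finGroupType) (a b h : gT) :
  S5_relations a b -> S5_relations (a ^ h) (b ^ h).
Proof.
by case=> Ra Rb Rab Rbab; split; rewrite -?conjXg -?conjMg -?conjXg ?(Ra, Rb, Rab, Rbab, conj1g).
Qed.

Definition table_S5_relations n (a b : seq nat) : bool :=
  [&& tpow n a 5 == iota 0 n, tpow n b 2 == iota 0 n, tpow n (tcomp a b) 4 == iota 0 n
    & tpow n (tcomp (tcomp (tcomp b (tpow n a 2)) b) (tpow n a 3)) 2 == iota 0 n].

Lemma S5_relations_tableP n (a b : {perm 'I_n}) :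
  reflect (S5_relations a b) (table_S5_relations n (ptable a) (ptable b)).
Proof.
rewrite /table_S5_relations -!ptableX -!ptableM -!ptableX -ptable1 !(inj_eq (@ptable_inj n)).
by apply: (iffP and4P) => -[/eqP ? /eqP ? /eqP ? /eqP ?].
Qed.


Lemma gen_succ_tperm n (c : {perm 'I_n.+2}) :
  (forall i : 'I_n.+2, i != ord_max -> val (c i) = i.+1) ->
  <<[set c; tperm ord0 (inord 1)]>>%g = [set: {perm 'I_n.+2}].
Proof.
move=> c_succ; apply/eqP; rewrite eqEsubset subsetT /= -(gen_tperm ord0) gen_subG.
apply/subsetP => _ /imsetP[j _ ->]; set H := (<<_>>)%G.
have c_in : c \in H by rewrite mem_gen // !inE eqxx.
have t_in : tperm ord0 (inord 1) \in H by rewrite mem_gen // !inE eqxx orbT.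
suff tH k : (k < n.+2)%N -> tperm ord0 (inord k) \in H by rewrite -(inord_val j) tH.
elim: k => [_|k IHk lt_k2].
  by rewrite (_ : inord 0 = ord0) ?tperm1 ?group1 //; apply/val_inj/inordK.
case: k IHk lt_k2 => [//|k IHk lt_k2].
have -> : tperm ord0 (inord k.+2) = ((tperm ord0 (inord k.+1) ^ c) ^ tperm ord0 (inord 1))%g.
  have c0 : c ord0 = inord 1 by apply: val_inj => /=; rewrite c_succ //= inordK.
  have ck : c (inord k.+1) = inord k.+2.
    have ltk1 : (k.+1 < n.+2)%N by exact: ltnW.
    have k1_max : inord k.+1 != ord_max :> 'I_n.+2.
      by rewrite -(inj_eq val_inj) /= inordK // neq_ltn -ltnS lt_k2.
    by apply: val_inj => /=; rewrite c_succ //= !inordK.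
  rewrite [tperm ord0 (inord 1)]tpermC tpermJ c0 ck tpermJ_tperm //.
  - by apply/eqP => /(congr1 val); rewrite /= !inordK.
  - by apply/eqP => /(congr1 val); rewrite /= inordK.
by rewrite !groupJ // IHk // ltnW.
Qed.

Definition cyc5 : {perm 'I_5} := perm_of_table 5 [:: 1; 2; 3; 4; 0]%N.
Definition swap01 : {perm 'I_5} := perm_of_table 5 [:: 1; 0; 2; 3; 4]%N.
Definition sqr_conj5 : {perm 'I_5} := perm_of_table 5 [:: 0; 3; 1; 4; 2]%N.

Lemma cyc5_neq1 : cyc5 != 1%g.
Proof. by apply/eqP => /(congr1 (@ptable 5)); rewrite ptable1 ptable_perm_of_table. Qed.

Lemma swap01E : swap01 = tperm ord0 (inord 1).
Proof.
apply/permP => i; apply: val_inj; rewrite perm_of_tableE //.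
case: tpermP => [->|->|]; rewrite /= ?inordK //.
case: i => -[|[|[|[|[|]]]]] // lt_i5 ne0 ne1.
- by case: ne0; apply: val_inj.
- by case: ne1; apply: val_inj; rewrite /= inordK.
Qed.

Lemma gen_cyc5_swap01 : <<[set cyc5; swap01]>>%g = [set: {perm 'I_5}].
Proof.
rewrite swap01E; apply: gen_succ_tperm => i.
by rewrite perm_of_tableE //; case: i => -[|[|[|[|[|]]]]].
Qed.

Lemma S5_relations_cyc5_swap01 : S5_relations cyc5 swap01.
Proof. by apply/S5_relations_tableP; rewrite !ptable_perm_of_table. Qed.

Lemma sqr_cyc5_conj : ((cyc5 ^+ 2) ^ sqr_conj5)%g = cyc5.
Proof.
rewrite conjgE; apply: (canLR (mulKg _)); apply: ptable_inj.
by rewrite !ptableM !ptable_perm_of_table.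
Qed.

Definition rho_table := [:: 1; 2; 3; 4; 0; 5]%N.
Definition beta_table := [:: 1; 0; 3; 2; 5; 4]%N.
Definition rho : {perm 'I_6} := perm_of_table 6 rho_table.
Definition beta : {perm 'I_6} := perm_of_table 6 beta_table.

Lemma ptable_rho : ptable rho = rho_table. Proof. exact: ptable_perm_of_table. Qed.
Lemma ptable_beta : ptable beta = beta_table. Proof. exact: ptable_perm_of_table. Qed.

Lemma rho_ord_max : rho ord_max = ord_max.
Proof. by apply: val_inj; rewrite perm_of_tableE. Qed.

Definition fixed_point (t : seq nat) := head 0%N [seq k <- iota 0 6 | nth 0%N t k == k].
Definition moved_point (t : seq nat) := head 0%N [seq k <- iota 0 6 | nth 0%N t k != k].

(* For a 5-cycle [a], a table [h] with [h * a = rho * h]. *)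
Definition rho_conjugator (a : seq nat) : seq nat :=
  [seq nth 0%N (tpow 6 a k) (moved_point a) | k <- iota 0 5] ++ [:: fixed_point a].

Lemma order5_tables_conj :
  all (fun a => (tpow 6 a 5 != iota 0 6) || (a == iota 0 6) ||
                perm_eq (rho_conjugator a) (iota 0 6) &&
                (tcomp (rho_conjugator a) a == tcomp rho_table (rho_conjugator a)))
      (permutations (iota 0 6)).
Proof. by vm_compute. Qed.

Lemma S5_tables_conj :
  all (fun b => ~~ table_S5_relations 6 rho_table b || (nth 0%N b 5 == 5%N) ||
                has (fun k => tcomp (tpow 6 rho_table k) b == tcomp beta_table (tpow 6 rho_table k))
                    (iota 0 5))
      (permutations (iota 0 6)).
Proof. by vm_compute. Qed.

Lemma order5_conj_rho (a : {perm 'I_6}) : (a ^+ 5 = 1)%g -> a != 1%g -> exists h, a = (rho ^ h)%g.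
Proof.
move=> a5 a_neq1; move/allP: order5_tables_conj => /(_ (ptable a)).
rewrite mem_permutations ptable_perm -ptableX a5 -ptable1 eqxx.
rewrite (inj_eq (@ptable_inj 6)) (negPf a_neq1) => /(_ isT) /andP[h_perm /eqP E].
exists (perm_of_table 6 (rho_conjugator (ptable a))).
by apply: conj_of_tcomp; rewrite ptable_rho ptable_perm_of_table // -ptable1.
Qed.

Lemma S5_partner_conj (b : {perm 'I_6}) :
  S5_relations rho b -> b ord_max != ord_max -> exists k, b = (beta ^ (rho ^+ k))%g.
Proof.
move=> /S5_relations_tableP Rb; rewrite -(inj_eq val_inj) /= => /negPf b5.
move/allP: S5_tables_conj => /(_ (ptable b)).
rewrite mem_permutations ptable_perm -ptable_rho Rb (nth_ptable b ord_max) b5.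
move=> /(_ isT) /hasP[k _ /eqP E]; exists k.
by apply: conj_of_tcomp; rewrite ptableX ptable_beta.
Qed.

Lemma S5_pair_conj (a b : {perm 'I_6}) :
  S5_relations a b -> a != 1%g -> (forall i, a i = i -> b i != i) ->
  exists tau, a = (rho ^ tau)%g /\ b = (beta ^ tau)%g.
Proof.
move=> Rab a_neq1 no_fix; have [Ra5 _ _ _] := Rab.
have [h a_def] := order5_conj_rho Ra5 a_neq1; subst a.
have Rb' := S5_relationsJ h^-1 Rab; rewrite conjgK in Rb'.
have [|k b'E] := S5_partner_conj Rb'.
  have rho_fix : (rho ^ h)%g (h ord_max) = h ord_max by rewrite permJ rho_ord_max.
  apply: contra (no_fix _ rho_fix) => /eqP fix_b; apply/eqP.
  by apply: (@perm_inj _ h^-1); rewrite -permJ !permK.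
exists (rho ^+ k * h)%g; split.
  by rewrite conjgM; congr (_ ^ h)%g; symmetry; apply/conjg_fixP/commgP/commuteX.
by rewrite conjgM -b'E conjgKV.
Qed.

Lemma transitive_image_no_common_fixpoint (G : {group {perm 'I_6}})
    (phi : {morphism [set: {perm 'I_5}] >-> {perm 'I_6}}) :
  phi @* [set: {perm 'I_5}] = G -> [transitive G, on [set: 'I_6] | 'P] ->
  forall i, phi cyc5 i = i -> phi swap01 i != i.
Proof.
move=> imG trG i fix_a; apply/negP => /eqP fix_b.
have /orbit1P : i \in 'Fix_('P)(G).
  have <- : phi @* <<[set cyc5; swap01]>> = G by rewrite gen_cyc5_swap01.
  rewrite morphim_gen ?subsetT // afix_gen.
  by apply/afixP => _ /morphimP[x _ /set2P[]-> ->].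
rewrite (atransP trG i (in_setT i)) => /(congr1 (fun A : {set 'I_6} => #|A|)).
by rewrite cardsT card_ord cards1.
Qed.

(** * The alternating subgroup *)

Definition A5_tables : seq (seq nat) := [::
  [:: 0; 1; 2; 3; 4; 5]; [:: 1; 2; 3; 4; 0; 5]; [:: 3; 0; 5; 2; 4; 1]; [:: 2; 3; 4; 0; 1; 5];
  [:: 0; 5; 2; 4; 3; 1]; [:: 4; 1; 5; 3; 0; 2]; [:: 2; 3; 1; 5; 4; 0]; [:: 3; 4; 0; 1; 2; 5];
  [:: 5; 2; 4; 3; 0; 1]; [:: 1; 5; 3; 0; 4; 2]; [:: 3; 1; 5; 4; 2; 0]; [:: 0; 2; 5; 4; 1; 3];
  [:: 4; 0; 1; 2; 3; 5]; [:: 3; 4; 2; 5; 0; 1]; [:: 5; 2; 0; 1; 4; 3]; [:: 2; 4; 3; 0; 5; 1];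
  [:: 5; 3; 0; 4; 1; 2]; [:: 1; 5; 4; 2; 3; 0]; [:: 2; 5; 4; 1; 0; 3]; [:: 4; 2; 5; 0; 3; 1];
  [:: 2; 0; 1; 4; 5; 3]; [:: 1; 3; 5; 0; 2; 4]; [:: 3; 5; 1; 4; 0; 2]; [:: 4; 3; 0; 5; 2; 1];
  [:: 4; 0; 3; 5; 1; 2]; [:: 2; 4; 5; 1; 3; 0]; [:: 5; 3; 1; 2; 0; 4]; [:: 3; 0; 4; 1; 5; 2];
  [:: 5; 4; 2; 3; 1; 0]; [:: 5; 4; 1; 0; 2; 3]; [:: 2; 5; 0; 3; 4; 1]; [:: 0; 1; 4; 5; 2; 3];
  [:: 3; 5; 0; 2; 1; 4]; [:: 5; 1; 4; 0; 3; 2]; [:: 0; 3; 5; 1; 4; 2]; [:: 4; 5; 1; 3; 2; 0];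
  [:: 3; 1; 2; 0; 5; 4]; [:: 0; 2; 1; 3; 5; 4]; [:: 4; 5; 2; 0; 1; 3]; [:: 2; 1; 0; 4; 3; 5];
  [:: 0; 4; 1; 5; 3; 2]; [:: 4; 2; 3; 1; 5; 0]; [:: 4; 3; 2; 1; 0; 5]; [:: 1; 2; 0; 5; 3; 4];
  [:: 4; 1; 0; 2; 5; 3]; [:: 5; 0; 3; 4; 2; 1]; [:: 1; 4; 5; 2; 0; 3]; [:: 5; 0; 2; 1; 3; 4];
  [:: 1; 4; 0; 3; 5; 2]; [:: 5; 1; 3; 2; 4; 0]; [:: 2; 1; 3; 5; 0; 4]; [:: 1; 0; 4; 3; 2; 5];
  [:: 3; 2; 1; 0; 4; 5]; [:: 2; 0; 5; 3; 1; 4]; [:: 1; 3; 2; 4; 5; 0]; [:: 0; 5; 3; 1; 2; 4];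
  [:: 1; 0; 2; 5; 4; 3]; [:: 0; 3; 4; 2; 5; 1]; [:: 0; 4; 3; 2; 1; 5]; [:: 3; 2; 4; 5; 1; 0]]%N.

Definition A5 : seq {perm 'I_6} := [seq perm_of_table 6 t | t <- A5_tables].

Lemma ptable_rho_beta : ptable (rho ^ beta)%g = [:: 3; 0; 5; 2; 4; 1]%N.
Proof.
have beta_inv : (beta^-1 = beta)%g.
  by apply/eqP; rewrite eq_invg_mul; apply/eqP/ptable_inj; rewrite ptableM ptable_beta ptable1.
by rewrite conjgE beta_inv !ptableM ptable_beta ptable_rho.
Qed.

Lemma A5_generated : generated_by 6 [seq ptable h | h <- [:: rho; rho ^ beta]%g] A5_tables.
Proof. by rewrite /= ptable_rho ptable_rho_beta; vm_compute. Qed.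

Lemma A5_tables_perm : all (fun t => perm_eq t (iota 0 6)) A5_tables.
Proof. by []. Qed.

End TransitiveS5.

(** * Averaging quartic monomials over A5 *)

Definition p2 (x : pt) : CC := \sum_(i < 6) x i ^+ 2.
Definition p4 (x : pt) : CC := \sum_(i < 6) x i ^+ 4.

(* The coefficients depend only on the exponent pattern (4), (3,1), (2,2),
   (2,1,1) or (1,1,1,1): on P4 the A5-average of a quartic monomial equals
   its S6-average. *)
Definition quartic_coefs (s : seq nat) : CC * CC :=
  match count (fun k => k != 0)%N s, foldr maxn 0%N s with
  | 1%N, _ => (0, 20%:R)
  | 2%N, 3%N => (0, - 4%:R)
  | 2%N, _ => (4%:R, - 4%:R)
  | 3%N, _ => (- 1, 2%:R)
  | _, _ => (1, - 2%:R)
  end.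

Definition A5_monomial_sum (e : seq nat) (y : seq CC) : CC :=
  \sum_(t <- A5_tables) \prod_(j <- iota 0 6) nth 0 y (nth 0%N t j) ^+ nth 0%N e j.

Lemma A5_monomial_sum_quartic (e0 e1 e2 e3 e4 e5 : nat) (y0 y1 y2 y3 y4 y5 : CC) :
  (e0 + e1 + e2 + e3 + e4 + e5 = 4)%N -> y0 + y1 + y2 + y3 + y4 + y5 = 0 ->
  let y := [:: y0; y1; y2; y3; y4; y5] in
  let c := quartic_coefs [:: e0; e1; e2; e3; e4; e5] in
  2%:R * A5_monomial_sum [:: e0; e1; e2; e3; e4; e5] y =
  c.1 * (\sum_(z <- y) z ^+ 2) ^+ 2 + c.2 * \sum_(z <- y) z ^+ 4.
Proof.
move=> deg_e sum_y; have -> : y5 = - (y0 + y1 + y2 + y3 + y4) by rewrite -[y5]subr0 -sum_y; ring.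
case: e0 deg_e => [|[|[|[|[|e0]]]]] deg_e; try (exfalso; lia);
  case: e1 deg_e => [|[|[|[|[|e1]]]]] deg_e; try (exfalso; lia);
  case: e2 deg_e => [|[|[|[|[|e2]]]]] deg_e; try (exfalso; lia);
  case: e3 deg_e => [|[|[|[|[|e3]]]]] deg_e; try (exfalso; lia);
  case: e4 deg_e => [|[|[|[|[|e4]]]]] deg_e; try (exfalso; lia);
  case: e5 deg_e => [|[|[|[|[|e5]]]]] deg_e; try (exfalso; lia);
  rewrite /A5_monomial_sum !unlock /=; ring.
Qed.

Lemma big_ord6 (R : Type) (idx : R) (op : R -> R -> R) (F : 'I_6 -> R) :
  \big[op/idx]_(i < 6) F i =
  op (F (inord 0)) (op (F (inord 1)) (op (F (inord 2))
    (op (F (inord 3)) (op (F (inord 4)) (op (F (inord 5)) idx))))).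
Proof.
rewrite !big_ord_recl big_ord0.
by congr (op (F _) (op (F _) (op (F _) (op (F _) (op (F _) (op (F _) _))))));
  apply: val_inj; rewrite /= inordK.
Qed.

Lemma A5_sum_monomial (e : 'I_6 -> nat) (y : pt) :
  \sum_(g <- A5) \prod_(j < 6) y (g j) ^+ e j =
  A5_monomial_sum [seq e (inord k) | k <- iota 0 6] [seq y (inord k) | k <- iota 0 6].
Proof.
rewrite big_map; apply: eq_big_seq => t /(allP A5_tables_perm) t_perm.
rewrite -[iota 0 6]/(index_iota 0 6) big_mkord; apply: eq_bigr => j _.
have t_lt : (nth 0%N t j < 6)%N by rewrite -(perm_of_tableE t_perm) ltn_ord.
rewrite !(nth_map 0%N) ?size_iota // !nth_iota // inord_val; congr (y _ ^+ _).
by apply: val_inj; rewrite /= perm_of_tableE // inordK.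
Qed.

Lemma A5_average_monomial (e : 'I_6 -> nat) (y : pt) :
  (\sum_(i < 6) e i)%N = 4%N -> in_P4 y ->
  let c := quartic_coefs [seq e (inord k) | k <- iota 0 6] in
  2%:R * \sum_(g <- A5) \prod_(j < 6) y (g j) ^+ e j = c.1 * p2 y ^+ 2 + c.2 * p4 y.
Proof.
rewrite /in_P4 /p2 /p4 !big_ord6 /= A5_sum_monomial !addn0 !addr0 !addnA !addrA.
move=> deg_e sum_y.
by rewrite (A5_monomial_sum_quartic deg_e sum_y) !big_cons !big_nil !addr0 !addrA.
Qed.

(** * Semi-invariant quartics *)

Lemma sum_permpt (F : CC -> CC) (g : {perm 'I_6}) (x : pt) :
  \sum_(i < 6) F (permpt g x i) = \sum_(i < 6) F (x i).
Proof. by rewrite [RHS](reindex_inj (@perm_inj _ g)). Qed.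

Lemma in_P4_permpt g x : in_P4 x -> in_P4 (permpt g x).
Proof. by rewrite /in_P4 (sum_permpt id). Qed.

Lemma p2_permpt g x : p2 (permpt g x) = p2 x.
Proof. exact: (sum_permpt (fun c => c ^+ 2)). Qed.

Lemma p4_permpt g x : p4 (permpt g x) = p4 x.
Proof. exact: (sum_permpt (fun c => c ^+ 4)). Qed.

Lemma meval_permptM (f : {mpoly CC[6]}) g h x :
  f.@[permpt (g * h)%g x] = f.@[permpt g (permpt h x)].
Proof. by apply: meval_eq => i; rewrite /permpt permM. Qed.

Lemma meval_permpt1 (f : {mpoly CC[6]}) x : f.@[permpt 1%g x] = f.@[x].
Proof. by apply: meval_eq => i; rewrite /permpt perm1. Qed.

Section SemiInvariance.
Variable f : {mpoly CC[6]}.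

Definition semi_invariant (g : {perm 'I_6}) (k : CC) : Prop :=
  forall x, in_P4 x -> f.@[permpt g x] = k * f.@[x].

Lemma semi_invariant1 : semi_invariant 1%g 1.
Proof. by move=> x _; rewrite meval_permpt1 mul1r. Qed.

Lemma semi_invariantM g h kg kh :
  semi_invariant g kg -> semi_invariant h kh -> semi_invariant (g * h)%g (kg * kh).
Proof.
move=> Hg Hh x Px; rewrite meval_permptM Hg; last exact: in_P4_permpt.
by rewrite Hh // mulrA.
Qed.

Lemma semi_invariantX g k n : semi_invariant g k -> semi_invariant (g ^+ n)%g (k ^+ n).
Proof.
move=> Hg; elim: n => [|n IHn]; first by rewrite expg0 expr0; exact: semi_invariant1.
by rewrite expgSr exprSr; apply: semi_invariantM.
Qed.

Lemma semi_invariantV g k : k != 0 -> semi_invariant g k -> semi_invariant g^-1%g k^-1.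
Proof.
move=> k_neq0 Hg x Px; apply: (mulfI k_neq0); rewrite mulrA divff // mul1r.
rewrite -Hg; last exact: in_P4_permpt.
by rewrite -(meval_permptM f g g^-1 x) mulgV meval_permpt1.
Qed.

Lemma semi_invariantJ g s k ks : ks != 0 ->
  semi_invariant g k -> semi_invariant s ks -> semi_invariant (g ^ s)%g k.
Proof.
move=> ks_neq0 Hg Hs; rewrite conjgE -[k](mulKf ks_neq0) [ks * k]mulrC.
by apply: semi_invariantM; [apply: semi_invariantV | apply: semi_invariantM].
Qed.

Lemma semi_invariant_uniq g k1 k2 x0 : in_P4 x0 -> f.@[x0] != 0 ->
  semi_invariant g k1 -> semi_invariant g k2 -> k1 = k2.
Proof. by move=> Px0 fx0 H1 H2; apply: (mulIf fx0); rewrite -H1 // -H2. Qed.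

End SemiInvariance.

Lemma sumr_const_seq (R : semiRingType) (T : Type) (r : seq T) (c : R) :
  \sum_(i <- r) c = (size r)%:R * c.
Proof.
elim: r => [|a r IHr]; first by rewrite big_nil mul0r.
by rewrite big_cons IHr /= mulrSr mulrDl mul1r addrC.
Qed.

Lemma meval_permptJ (f : {mpoly CC[6]}) (g tau : {perm 'I_6}) (x : pt) :
  f.@[permpt (g ^ tau)%g x] =
  \sum_(m <- msupp f) f@_m * \prod_(j < 6) permpt tau x (g j) ^+ m (tau j).
Proof.
rewrite mevalE; apply: eq_bigr => m _; congr (_ * _).
by rewrite (reindex_inj (@perm_inj _ tau)); apply: eq_bigr => j _; rewrite /permpt permJ.
Qed.

Lemma A5_invariant_quartic (f : {mpoly CC[6]}) (tau : {perm 'I_6}) :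
  f \is 4.-homog -> (forall g, g \in A5 -> semi_invariant f (g ^ tau)%g 1) ->
  exists c : CC * CC, forall x, in_P4 x -> f.@[x] = c.1 * p2 x ^+ 2 + c.2 * p4 x.
Proof.
move=> /dhomogP f_homog f_inv.
pose c m := quartic_coefs [seq (m : 'X_{1..6}) (tau (inord k)) | k <- iota 0 6].
exists ((\sum_(m <- msupp f) f@_m * (c m).1) / 120%:R,
        (\sum_(m <- msupp f) f@_m * (c m).2) / 120%:R).
move=> x Px.
suff avg : 120%:R * f.@[x] = \sum_(m <- msupp f) f@_m * ((c m).1 * p2 x ^+ 2 + (c m).2 * p4 x).
  apply: (@mulfI _ 120%:R); first by rewrite pnatr_eq0.
  rewrite avg; under eq_bigr do rewrite mulrDr !mulrA.
  by rewrite big_split -!mulr_suml /=; field.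
have -> : 120%:R * f.@[x] = 2%:R * \sum_(g <- A5) f.@[permpt (g ^ tau)%g x].
  rewrite (eq_big_seq (fun=> f.@[x])) => [|g /f_inv]; last by move/(_ x Px); rewrite mul1r.
  by rewrite sumr_const_seq mulrA -natrM size_map.
under eq_bigr do rewrite meval_permptJ.
rewrite exchange_big mulr_sumr; apply: eq_big_seq => m m_supp.
rewrite -mulr_sumr mulrCA -(p2_permpt tau) -(p4_permpt tau); congr (_ * _).
rewrite A5_average_monomial; last exact: in_P4_permpt.
  by [].
transitivity (mdeg m); last exact: f_homog.
by rewrite mdegE [RHS](reindex_inj (@perm_inj _ tau)).
Qed.

Lemma transitive_S5_A5_invariant (G : {group {perm 'I_6}}) (f : {mpoly CC[6]}) :
  G \isog [set: {perm 'I_5}] -> [transitive G, on [set: 'I_6] | 'P] ->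
  (exists x, in_P4 x /\ f.@[x] != 0) -> invariant_under G f ->
  exists tau, forall g, g \in A5 -> semi_invariant f (g ^ tau)%g 1.
Proof.
rewrite isog_sym => /isogP[phi phi_inj imG] trG [x0 [Px0 fx0]] f_inv.
have phiG s : phi s \in G by rewrite -imG mem_morphim ?inE.
have [ka ka0 Ha] := f_inv _ (phiG cyc5).
have [kb kb0 Hb] := f_inv _ (phiG swap01).
have [ks ks0 Hs] := f_inv _ (phiG sqr_conj5).
have ka1 : ka = 1.
  (* a character takes the same value on cyc5 and on its conjugate cyc5 ^+ 2 *)
  have Ha2 : semi_invariant f (phi cyc5) (ka ^+ 2).
    rewrite -sqr_cyc5_conj morphJ ?inE // morphX ?inE //.
    exact: semi_invariantJ ks0 (semi_invariantX _ Ha) Hs.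
  apply: (mulfI ka0); rewrite mulr1 -expr2.
  exact: semi_invariant_uniq Px0 fx0 Ha2 Ha.
rewrite {}ka1 in Ha.
have Rab := S5_relations_morph phi (in_setT _) (in_setT _) S5_relations_cyc5_swap01.
have a_neq1 : phi cyc5 != 1%g by rewrite morph_injm_eq1 ?inE ?cyc5_neq1.
have [tau [aE bE]] :=
  S5_pair_conj Rab a_neq1 (transitive_image_no_common_fixpoint imG trG).
exists tau; apply: generated_byP A5_generated => [|g h].
  by rewrite conj1g; exact: semi_invariant1.
rewrite !inE => /orP[]/eqP-> Hg; rewrite conjMg -[1]mulr1; apply: semi_invariantM Hg _.
  by rewrite -aE.
by rewrite conjJg -aE -bE; apply: semi_invariantJ kb0 Ha Hb.
Qed.

Lemma v0_in_P4 : in_P4 v0.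
Proof. by rewrite /in_P4 big_ord6 /v0 !inordK //=; ring. Qed.

Lemma is_Xt_of_power_sums (f : {mpoly CC[6]}) (c : CC * CC) :
  (forall x, in_P4 x -> f.@[x] = c.1 * p2 x ^+ 2 + c.2 * p4 x) ->
  f.@[v0] = 0 -> (exists x, in_P4 x /\ f.@[x] != 0) -> is_Xt (1 / 6) f.
Proof.
move=> fE fv0 [x0 [Px0 fx0]].
have p2v0 : p2 v0 = 6%:R by rewrite /p2 big_ord6 /v0 !inordK //=; ring.
have p4v0 : p4 v0 = 6%:R by rewrite /p4 big_ord6 /v0 !inordK //=; ring.
have c1E : c.1 = - c.2 / 6%:R.
  have E := fE _ v0_in_P4; rewrite fv0 p2v0 p4v0 in E.
  have -> : c.1 = (c.1 * 6%:R ^+ 2 + c.2 * 6%:R) / 36%:R - c.2 / 6%:R by field.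
  by rewrite -E mul0r add0r mulNr.
exists c.2.
  by apply: contra fx0 => /eqP c2_0; rewrite fE // c1E c2_0 oppr0 !mul0r addr0.
by move=> x Px; rewrite fE // c1E /Ft -/(p2 x) -/(p4 x); field.
Qed.

Theorem lemma4p11 (G : {group {perm 'I_6}}) (f : {mpoly CC[6]}) :
  G \isog [set: {perm 'I_5}] ->
  [transitive G, on [set: 'I_6] | 'P] ->
  quartic_threefold f ->
  invariant_under G f ->
  contains_Sigma10 f ->
  is_Xt (1 / 6) f.
Proof.
move=> isoG trG [f_homog f_nz] f_inv f_Sigma.
have [tau A5_inv] := transitive_S5_A5_invariant isoG trG f_nz f_inv.
have [c fE] := A5_invariant_quartic f_homog A5_inv.
apply: is_Xt_of_power_sums fE _ f_nz.
by rewrite -(f_Sigma 1%g) meval_permpt1.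
Qed.
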